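(* For cake instances, Generalized PAV does not satisfy cake EJR: there exists a cake instance and an allocation selected by Generalized PAV that violates cake EJR.
   Context: Model: There is a set of agents $N=\{1,\dots,n\}$. The resource $R$ consists of a cake $C=[0,c]$ for a real $c\ge 0$ and a set of indivisible goods $G=\{g_1,\dots,g_m\}$ for an integer $m\ge 0$, with $\max(c,m)>0$. A piece of cake is a union of finitely many disjoint closed subintervals of $C$; its length $\ell(\cdot)$ is the sum of the lengths of its intervals. A bundle $R'=(C',G')$ consists of a piece of cake $C'\subseteq C$ and a set $G'\subseteq G$; its size is $s(R')=\ell(C')+|G'|$. Each agent $i$ approves a bundle $R_i=(C_i,G_i)$, and her utility for a bundle $R'$ is $u_i(R')=\ell(C_i\cap C')+|G_i\cap G'|$. A parameter $\alpha\in(0,c+m]$ is given; an allocation is a bundle $A$ with $s(A)\le\alpha$. A cake instance is one with $m=0$. For a real $t>0$, $N^*\subseteq N$ is $t$-cohesive if $|N^*|\ge t n/\alpha$ and $s(\bigcap_{i\in N^*}R_i)\ge t$. Cake EJR: an allocation $A$ satisfies cake EJR if for every real $t>0$ and every $t$-cohesive group $N^*$, some $j\in N^*$ has $u_j(A)\ge t$. Generalized harmonic numbers: $H_x\coloneqq\sum_{k=1}^\infty\frac{x}{k(x+k)}$ for real $x\ge0$. Generalized PAV selects an allocation $R'$ with $s(R')\le\alpha$ maximizing $\sum_{i\in N}H_{u_i(R')}$. *)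

From HB Require Import structures.
From mathcomp Require Import all_boot all_order all_algebra.
From mathcomp Require Import all_classical all_reals all_analysis.
From mathcomp Require Import Rstruct Rstruct_topology.
Set Implicit Arguments. Unset Strict Implicit. Unset Printing Implicit Defensive.
Import Order.TTheory GRing.Theory Num.Theory.
Local Open Scope classical_set_scope.
Local Open Scope ring_scope.

Notation R := Rdefinitions.R.

Definition closed_itv (p : R * R) : set R := [set x | p.1 <= x <= p.2].

Definition is_piece (c : R) (S : set R) : Prop :=
  exists s : seq (R * R),
    (forall p, p \in s -> 0 <= p.1 /\ p.1 <= p.2 /\ p.2 <= c) /\
    (forall i j, (i < j < size s)%N ->
        closed_itv (nth (0, 0) s i) `&` closed_itv (nth (0, 0) s j) = set0) /\
    S = [set x | exists2 p, p \in s & closed_itv p x].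

Definition len (S : set R) : R := fine (lebesgue_measure S).

Definition genH (x : R) : R :=
  \big[+%R/0%R]_(1 <= k <oo) (x / (k%:R * (x + k%:R))).

Definition cake_instance (n : nat) (c alpha : R) (Rp : 'I_n -> set R) : Prop :=
  (0 < n)%N /\ 0 < c /\ 0 < alpha <= c /\ (forall i, is_piece c (Rp i)).

Definition util n (Rp : 'I_n -> set R) (i : 'I_n) (A : set R) : R :=
  len (Rp i `&` A).

Definition allocation (c alpha : R) (A : set R) : Prop :=
  is_piece c A /\ len A <= alpha.

Definition gen_PAV_selects n (c alpha : R) (Rp : 'I_n -> set R) (A : set R)
  : Prop :=
  allocation c alpha A /\
  forall B, allocation c alpha B ->
    \sum_(i < n) genH (util Rp i B) <= \sum_(i < n) genH (util Rp i A).

Definition group_inter n (Rp : 'I_n -> set R) (Ns : {set 'I_n}) : set R :=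
  [set x | forall i, i \in Ns -> Rp i x].

Definition cohesive n (alpha : R) (Rp : 'I_n -> set R) (t : R)
  (Ns : {set 'I_n}) : Prop :=
  t * n%:R / alpha <= #|Ns|%:R /\ t <= len (group_inter Rp Ns).

Definition cake_EJR n (alpha : R) (Rp : 'I_n -> set R) (A : set R) : Prop :=
  forall (t : R) (Ns : {set 'I_n}), 0 < t -> cohesive alpha Rp t Ns ->
    exists2 j, j \in Ns & t <= util Rp j A.

From HB Require Import structures.
From mathcomp Require Import all_boot all_order all_algebra.
From mathcomp Require Import all_classical all_reals all_analysis.
From mathcomp Require Import Rstruct Rstruct_topology.
From mathcomp Require Import ring lra.
Import Order.TTheory GRing.Theory Num.Theory.
Local Open Scope classical_set_scope.
Local Open Scope ring_scope.

(* Five agents share the cake [0,2] with alpha = 1: agent 0 approves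
   [0,1/5], the other four approve [1,2].  Any allocation B gives agent 0
   utility a and the others utility b with a + b <= 1, and the welfare
   H_a + 4 H_b is maximised by a = 0, b = 1, because the inequality
   H_a + 4 H_b <= 4 H_1 already holds term by term in the series defining H.
   So PAV may select [1,2], leaving agent 0 with nothing although {0} is a
   (1/5)-cohesive group. *)

Definition harm_term (x : R) (k : nat) : R := x / (k%:R * (x + k%:R)).

Definition harm_partial (x : R) (n : nat) : R := \sum_(1 <= k < n) harm_term x k.

Lemma genH_partialE x : genH x = limn (harm_partial x).
Proof. by []. Qed.

Lemma harm_term_ge0 x k : 0 <= x -> 0 <= harm_term x k.
Proof.
move=> x0; rewrite /harm_term; apply: mulr_ge0 => //; rewrite invr_ge0.
by apply: mulr_ge0 => //; apply: addr_ge0.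
Qed.

Lemma harm_term_le_telescope {x m : R} : 0 <= x -> 1 <= m ->
  x / (m * (x + m)) <= 2 * x / m - 2 * x / (m + 1).
Proof.
move=> x0 m1.
have -> : 2 * x / m - 2 * x / (m + 1) = 2 * x / (m * (m + 1)).
  by field; apply/andP; split; apply/negP => /eqP; lra.
rewrite ler_pdivrMr; last by apply: mulr_gt0; lra.
rewrite mulrAC ler_pdivlMr; last by apply: mulr_gt0; lra.
have h : 0 <= x * m * (2 * x + m - 1) by apply: mulr_ge0; [apply: mulr_ge0|]; lra.
nra.
Qed.

Lemma harm_partial_le x n : 0 <= x -> harm_partial x n.+1 <= 2 * x - 2 * x / n.+1%:R.
Proof.
move=> x0; elim: n => [|n IH]; first by rewrite /harm_partial big_geq // divr1 subrr.
rewrite /harm_partial big_nat_recr //= -/(harm_partial x n.+1) /harm_term.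
have n1 : (1 : R) <= n.+1%:R by rewrite ler1n.
have -> : (n.+2%:R : R) = n.+1%:R + 1 by rewrite -natr1.
apply: le_trans (lerD IH (harm_term_le_telescope x0 n1)) _.
by rewrite addrA subrK.
Qed.

Lemma harm_partial_cvg x : 0 <= x -> harm_partial x @ \oo --> genH x.
Proof.
move=> x0; apply: nondecreasing_is_cvgn.
  move=> n m nm; rewrite /harm_partial.
  case: n nm => [|n] nm.
    by rewrite big_geq //; apply: sumr_ge0 => k _; exact: harm_term_ge0.
  rewrite [leRHS](@big_cat_nat _ _ _ n.+1) //= lerDl.
  by apply: sumr_ge0 => k _; exact: harm_term_ge0.
exists (2 * x) => _ [n _ <-].
case: n => [|n]; first by rewrite /harm_partial big_geq //; lra.
apply: le_trans (harm_partial_le x n x0) _.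
by rewrite gerBl; apply: divr_ge0 => //; lra.
Qed.

Lemma ler_genH_natmul (a b d : R) (p q r : nat) : 0 <= a -> 0 <= b -> 0 <= d ->
  (forall k, harm_term a k *+ p + harm_term b k *+ q <= harm_term d k *+ r) ->
  genH a *+ p + genH b *+ q <= genH d *+ r.
Proof.
move=> a0 b0 d0 le_term.
have cvgMn_partial x m : 0 <= x ->
    (fun n => harm_partial x n *+ m) @ \oo --> genH x *+ m.
  by move=> x0; exact: (@cvgMn R R^o nat _ _ _ m _ (harm_partial_cvg x x0)).
apply: (ler_cvg_to _ (cvgMn_partial d r d0)).
  exact: (@cvgD R R^o nat _ _ _ _ _ _ (cvgMn_partial a p a0) (cvgMn_partial b q b0)).
apply: nearW => n; rewrite /harm_partial !fctE -!sumrMnl -big_split /=.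
by apply: ler_sum => k _; exact: le_term.
Qed.

Lemma genH0 : genH 0 = 0.
Proof.
rewrite genH_partialE.
have -> : harm_partial 0 = fun _ => 0.
  by apply: funext => n; rewrite /harm_partial big1 // => k _; rewrite /harm_term mul0r.
apply: cvg_lim; [exact: Rhausdorff | exact: cvg_cst].
Qed.

(* For m >= 1: 4 (1/(m(1+m)) - b/(m(b+m))) = 4 (1-b)/((m+1)(b+m)), which
   dominates (1-b)/m^2 >= a/(m(a+m)) since (m+1)(b+m) <= (m+1)^2 <= 4 m^2. *)
Lemma PAV_term_le (a b m : R) : 0 <= a -> 0 <= b -> a + b <= 1 -> 1 <= m ->
  a / (m * (a + m)) + 4 * (b / (m * (b + m))) <= 4 * (1 / (m * (1 + m))).
Proof.
move=> a0 b0 ab m1.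
have E : 4 * (1 / (m * (1 + m))) - 4 * (b / (m * (b + m)))
    = 4 * (1 - b) / ((m + 1) * (b + m)).
  by field; do ! (apply/andP; split); apply/negP => /eqP; lra.
suff : a / (m * (a + m)) <= 4 * (1 - b) / ((m + 1) * (b + m)).
  by rewrite -E lerBrDr.
rewrite ler_pdivrMr; last by apply: mulr_gt0; lra.
rewrite mulrAC ler_pdivlMr; last by apply: mulr_gt0; lra.
have h1 : 0 <= ((1 - b) - a) * (m + 1) * (b + m).
  by apply: mulr_ge0; [apply: mulr_ge0|]; lra.
have h2 : 0 <= (1 - b) * (m + 1) * (1 - b).
  by apply: mulr_ge0; [apply: mulr_ge0|]; lra.
have h3 : 0 <= (1 - b) * (m - 1) * (3 * m + 1).
  by apply: mulr_ge0; [apply: mulr_ge0|]; lra.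
have h4 : 0 <= (1 - b) * m * a.
  by apply: mulr_ge0; [apply: mulr_ge0|]; lra.
nra.
Qed.

Lemma harm_term_PAV_le a b k : 0 <= a -> 0 <= b -> a + b <= 1 ->
  harm_term a k + harm_term b k *+ 4 <= harm_term 1 k *+ 4.
Proof.
move=> a0 b0 ab; case: k => [|k].
  by rewrite /harm_term !mul0r !invr0 !mulr0 mul0rn addr0.
rewrite -[harm_term b _ *+ 4]mulr_natl -[harm_term 1 _ *+ 4]mulr_natl.
by apply: PAV_term_le => //; rewrite ler1n.
Qed.

Lemma genH_PAV_le a b : 0 <= a -> 0 <= b -> a + b <= 1 ->
  genH a + genH b *+ 4 <= genH 1 *+ 4.
Proof.
move=> a0 b0 ab; rewrite -[genH a]mulr1n.
apply: ler_genH_natmul => // k; rewrite mulr1n; exact: harm_term_PAV_le.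
Qed.

Notation mes X := (measurable (X : set (measurableTypeR R))).

Lemma closed_itvE (a b : R) : closed_itv (a, b) = `[a, b]%classic.
Proof. by apply/seteqP; split => x /=; rewrite in_itv /=. Qed.

Lemma len_closed_itv (a b : R) : a <= b -> len (closed_itv (a, b)) = b - a.
Proof.
move=> ab; rewrite /len closed_itvE lebesgue_measure_itv /=.
case: ifP => //; rewrite lte_fin => ba /=.
have -> : a = b by apply/eqP; rewrite eq_le ab /= leNgt ba.
by rewrite subrr.
Qed.

Lemma len_ge0 (X : set R) : 0 <= len X.
Proof. by apply: fine_ge0; exact: measure_ge0. Qed.

Lemma len0 : len set0 = 0.
Proof. by rewrite /len measure0. Qed.

Lemma measurable_closed_itv (p : R * R) : mes (closed_itv p).
Proof. by case: p => a b; rewrite closed_itvE; exact: measurable_itv. Qed.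

Lemma closed_itv_piece (c a b : R) :
  0 <= a -> a <= b -> b <= c -> is_piece c (closed_itv (a, b)).
Proof.
move=> a0 ab bc; exists [:: (a, b)]; split; [|split].
- by move=> p; rewrite mem_seq1 => /eqP ->.
- by move=> [|i] [|j] //= /andP [].
- apply/seteqP; split => x /=.
    by move=> h; exists (a, b) => //; rewrite mem_seq1.
  by move=> [p]; rewrite mem_seq1 => /eqP ->.
Qed.

Lemma measurable_bigcup_closed_itv (s : seq (R * R)) :
  mes [set x | exists2 p, p \in s & closed_itv p x].
Proof.
elim: s => [|p s IH].
  by rewrite (_ : [set x | _] = set0) //; apply/seteqP; split => x //= [].
rewrite (_ : [set x | _] = closed_itv p `|` [set x | exists2 q, q \in s & closed_itv q x]).
  exact: measurableU (measurable_closed_itv p) IH.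
apply/seteqP; split => x /=.
  by move=> [q]; rewrite in_cons => /orP [/eqP -> | qs]; [left | right; exists q].
move=> [px | [q qs qx]]; first by exists p => //; rewrite in_cons eqxx.
by exists q => //; rewrite in_cons qs orbT.
Qed.

Lemma measurable_piece c X : is_piece c X -> mes X.
Proof. by move=> [s [_ [_ ->]]]; exact: measurable_bigcup_closed_itv. Qed.

Lemma piece_fin_num c X : is_piece c X -> lebesgue_measure X \is a fin_num.
Proof.
move=> [s [sub_c [_ ->]]]; rewrite ge0_fin_numE ?measure_ge0 //.
apply: (@le_lt_trans _ _ (lebesgue_measure (closed_itv (0, c)))).
  apply: le_measure; rewrite ?inE; [exact: measurable_bigcup_closed_itv|
    exact: measurable_closed_itv|].
  move=> x [p /sub_c [p0 [p12 p2]]] /= /andP [p1x xp2].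
  by apply/andP; split; [exact: le_trans p1x | exact: le_trans p2].
by rewrite closed_itvE lebesgue_measure_itv /=; case: ifP; rewrite ?ltry.
Qed.

Lemma len_setI_disjoint_le (X I J : set R) :
  mes X -> lebesgue_measure X \is a fin_num -> mes I -> mes J -> I `&` J = set0 ->
  len (I `&` X) + len (J `&` X) <= len X.
Proof.
move=> mX finX mI mJ IJ.
have mIX := measurableI _ _ mI mX; have mJX := measurableI _ _ mJ mX.
have fin_sub Y : mes Y -> Y `<=` X -> lebesgue_measure Y \is a fin_num.
  move=> mY YX; rewrite ge0_fin_numE ?measure_ge0 //.
  apply: le_lt_trans (le_measure _ _ _ YX) _; rewrite ?inE //.
  by rewrite -ge0_fin_numE ?measure_ge0.
rewrite -lee_fin EFinD /len !fineK //; last 2 first.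
- by apply: fin_sub => // x [].
- by apply: fin_sub => // x [].
rewrite -measureU //; last by rewrite setIACA IJ set0I.
by apply: le_measure; rewrite ?inE //; [exact: measurableU | move=> x [[]|[]]].
Qed.

Definition lone_piece : set R := closed_itv (0, 1/5).
Definition crowd_piece : set R := closed_itv (1, 2).
Definition ex_approval (i : 'I_5) : set R :=
  if i == ord0 then lone_piece else crowd_piece.

Lemma len_lone_piece : len lone_piece = 1/5.
Proof. by rewrite len_closed_itv; lra. Qed.

Lemma len_crowd_piece : len crowd_piece = 1.
Proof. by rewrite len_closed_itv; lra. Qed.

Lemma lone_crowd_disjoint : lone_piece `&` crowd_piece = set0.
Proof.
apply/seteqP; split => x //; rewrite /lone_piece /crowd_piece /closed_itv /=.
by move=> [/andP [? ?] /andP [? ?]]; lra.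
Qed.

Lemma ex_welfareE (B : set R) :
  \sum_(i < 5) genH (util ex_approval i B)
  = genH (len (lone_piece `&` B)) + genH (len (crowd_piece `&` B)) *+ 4.
Proof.
rewrite big_ord_recl (eq_bigr (fun _ => genH (len (crowd_piece `&` B)))).
  by rewrite sumr_const card_ord.
by move=> i _; rewrite /util /ex_approval eq_sym (negbTE (neq_lift _ _)).
Qed.

Lemma ex_cake_instance : cake_instance 2 1 ex_approval.
Proof.
do !split => //; try lra.
by move=> i; rewrite /ex_approval; case: ifP => _; apply: closed_itv_piece; lra.
Qed.

Lemma ex_PAV_selects_crowd : gen_PAV_selects 2 1 ex_approval crowd_piece.
Proof.
split; first by split; [apply: closed_itv_piece | rewrite len_crowd_piece]; lra.
move=> B [pB lenB]; rewrite !ex_welfareE lone_crowd_disjoint setIid len0.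
rewrite len_crowd_piece genH0 add0r.
apply: genH_PAV_le; [exact: len_ge0 | exact: len_ge0 |].
apply: le_trans lenB; apply: len_setI_disjoint_le lone_crowd_disjoint.
- exact: measurable_piece pB.
- exact: piece_fin_num pB.
- exact: measurable_closed_itv.
- exact: measurable_closed_itv.
Qed.

Lemma ex_crowd_not_EJR : ~ cake_EJR 1 ex_approval crowd_piece.
Proof.
have lone_inter : group_inter ex_approval [set ord0]%SET = lone_piece.
  apply/seteqP; split => x /=.
    by move=> /(_ ord0); rewrite inE eqxx /ex_approval eqxx; apply.
  by move=> h i; rewrite inE => /eqP ->; rewrite /ex_approval eqxx.
move=> /(_ (1/5) [set ord0]%SET) [||j].
- lra.
- by rewrite /cohesive lone_inter len_lone_piece cards1; split; lra.
rewrite inE => /eqP ->.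
by rewrite /util /ex_approval eqxx lone_crowd_disjoint len0; lra.
Qed.

Theorem mainTheorem12 :
  exists (n : nat) (c alpha : R) (Rp : 'I_n -> set R) (A : set R),
    cake_instance c alpha Rp /\ gen_PAV_selects c alpha Rp A /\
    ~ cake_EJR alpha Rp A.
Proof.
exists 5, 2, 1, ex_approval, crowd_piece.
split; [exact: ex_cake_instance | split].
- exact: ex_PAV_selects_crowd.
- exact: ex_crowd_not_EJR.
Qed.
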